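(* Fix an integer base $B\ge 2$. Let $m$ be a positive integer such that $mn$ is economical for every economical positive integer $n$. Then $m$ is frugal.
   Context: For a positive integer $n$, $\delta(n)$ is the number of digits of $n$ in base $B$, i.e. $\delta(n)=k$ iff $B^{k-1}\le n<B^k$. Define $\delta'(1)=0$ and $\delta'(a)=\delta(a)$ for $a>1$. If $n=\prod_{i} p_i^{a_i}$ is the prime power factorisation, set $\phi(n)=\sum_i \big(\delta(p_i)+\delta'(a_i)\big)$ (with $\phi(1)=0$), and $h(n)=\delta(n)-\phi(n)$. $n$ is economical if $h(n)\ge0$ and frugal if $h(n)>0$. *)

From mathcomp Require Import all_boot all_order all_algebra.
Set Implicit Arguments. Unset Strict Implicit. Unset Printing Implicit Defensive.
Import GRing.Theory Num.Theory.

(* delta B n = number of base-B digits of n (for n >= 1, B >= 2):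
   delta B n = k  iff  B^(k-1) <= n < B^k.  trunc_log B n is the largest e
   with B^e <= n. *)
Definition delta (B n : nat) : nat := (trunc_log B n).+1.

Definition delta' (B a : nat) : nat := if a == 1 then 0 else delta B a.

Definition phi (B n : nat) : nat :=
  \sum_(pa <- prime_decomp n) (delta B pa.1 + delta' B pa.2).

Definition h (B n : nat) : int := (delta B n)%:Z - (phi B n)%:Z.

Definition economical (B n : nat) : bool := (0 <= h B n)%R.
Definition frugal (B n : nat) : bool := (0 < h B n)%R.

From mathcomp Require Import all_boot all_order all_algebra.
From mathcomp Require Import zify.
Set Implicit Arguments. Unset Strict Implicit. Unset Printing Implicit Defensive.

(* If n is coprime to m, satisfies phi n = delta n, and m n has one digit fewer than m and n
   together, then economy of m n reads phi m + phi n <= delta m + delta n - 1, so m is frugal.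
   Such an n is built as y u^a v^b.  The primes u, v lie above m, and some ratio u^d / v^c is
   within a factor 1 + 1/m of 1 (pigeonhole on the ratios u^a / v^c with v^c <= u^a < v^(c+1));
   trading u^d against v^c moves y u^a v^b in steps of relative size less than 1/m, which places
   it in [B^K, (1 + 1/m) B^K), i.e. makes m n lose a digit.  The exponents a, b are chosen with
   a fixed number of digits, and y, a product of distinct large primes, makes the digit budget
   exact: it exists because the product of 1 + 1/p over the primes diverges, which is proved
   by counting multiples of primes among the numbers up to 2^t. *)

(** * Digit counts and the cost [phi] *)

Lemma phiE B n :
  phi B n = \sum_(p <- primes n) (delta B p + delta' B (logn p n)).
Proof. by rewrite /phi prime_decompE big_map. Qed.

Lemma coprime_big_prodr (I : Type) (r : seq I) (P : pred I) (F : I -> nat) d :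
  (forall i, P i -> coprime d (F i)) -> coprime d (\prod_(i <- r | P i) F i).
Proof.
move=> dF; elim/big_ind: _ => //; first exact: coprimen1.
by move=> x y dx dy; rewrite coprimeMr dx.
Qed.

Lemma perm_primes_coprimeM x y : 0 < x -> 0 < y -> coprime x y ->
  perm_eq (primes (x * y)) (primes x ++ primes y).
Proof.
move=> x0 y0 cxy; apply: uniq_perm; first exact: primes_uniq.
  rewrite cat_uniq !primes_uniq andbT /=; apply/hasPn => p py; apply/negP => px.
  move: px py; rewrite !mem_primes => /and3P[pp _ px] /and3P[_ _ py].
  have := coprime_dvdl px cxy; rewrite coprime_sym => /(coprime_dvdl py).
  by rewrite prime_coprime // dvdnn.
by move=> p; rewrite mem_cat primesM.
Qed.

Lemma phiM B x y : 0 < x -> 0 < y -> coprime x y ->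
  phi B (x * y) = phi B x + phi B y.
Proof.
move=> x0 y0 cxy; rewrite !phiE (perm_big _ (perm_primes_coprimeM x0 y0 cxy)).
have lognM_coprime z w p : 0 < w -> coprime z w -> p \in primes z ->
    logn p (z * w) = logn p z.
  move=> w0 czw; rewrite mem_primes => /and3P[pp z0 pz].
  by rewrite lognM // (logn_coprime (coprime_dvdl pz czw)) addn0.
rewrite big_cat /=; congr (_ + _); apply: eq_big_seq => p pP.
  by rewrite lognM_coprime.
by rewrite mulnC lognM_coprime // coprime_sym.
Qed.

Lemma phi_primeX B p a : prime p -> 0 < a ->
  phi B (p ^ a) = delta B p + delta' B a.
Proof. by move=> pp a0; rewrite phiE primesX // primes_prime // big_seq1 pfactorK. Qed.

Lemma phi_prime B p : prime p -> phi B p = delta B p.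
Proof. by move=> pp; rewrite -[p]expn1 phi_primeX // addn0. Qed.

Lemma phi_prod_primes B (s : seq nat) : uniq s -> all prime s ->
  phi B (\prod_(p <- s) p) = \sum_(p <- s) delta B p.
Proof.
elim: s => [|p s IHs] /=; first by rewrite !big_nil phiE big_nil.
move=> /andP[ps us] /andP[pp sP]; rewrite !big_cons -IHs //.
have s0 : 0 < \prod_(q <- s) q by rewrite big_seq prodn_cond_gt0 // => q /(allP sP)/prime_gt0.
have cps : coprime p (\prod_(q <- s) q).
  rewrite big_seq; apply: coprime_big_prodr => q qs.
  by rewrite prime_coprime // dvdn_prime2 ?(allP sP q qs) //; apply/eqP => pq; rewrite pq qs in ps.
by rewrite (phiM B (prime_gt0 pp) s0 cps) phi_prime.
Qed.

Lemma delta_eq B n K : 1 < B -> B ^ K <= n < B ^ K.+1 -> delta B n = K.+1.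
Proof. by move=> B1 Kn; rewrite /delta (trunc_log_eq B1 Kn). Qed.

Lemma ltn_exp_delta B n : 1 < B -> n < B ^ delta B n.
Proof. exact: trunc_log_ltn. Qed.

Lemma exp_delta_leq B n : 1 < B -> 0 < n -> B ^ (delta B n).-1 <= n.
Proof. exact: trunc_logP. Qed.

Lemma exp_delta_leqM B n : 1 < B -> 0 < n -> B ^ delta B n <= B * n.
Proof. by move=> B1 n0; rewrite /delta expnS leq_mul2l exp_delta_leq ?orbT. Qed.

Lemma delta_window B m n K : 1 < B -> 0 < m ->
  B ^ K <= n -> m * n < (m + 1) * B ^ K ->
  delta B n = K.+1 /\ delta B (m * n) = K + delta B m.
Proof.
move=> B1 m0 Kn mn; have m_lo := exp_delta_leq B1 m0; have m_hi := ltn_exp_delta m B1.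
split.
  apply: delta_eq => //; rewrite Kn expnS /=; apply: leq_trans (_ : 2 * B ^ K <= _); first by nia.
  by rewrite leq_mul2r B1 orbT.
have dm0 : 0 < delta B m by [].
rewrite -(prednK dm0) addnS; apply: delta_eq => //.
apply/andP; split; first by rewrite expnD mulnC leq_mul.
rewrite -addnS prednK // expnD.
by apply: leq_trans mn _; rewrite mulnC leq_mul2l addn1 m_hi orbT.
Qed.

Lemma economicalE B n : economical B n = (phi B n <= delta B n).
Proof. by rewrite /economical /h Num.Theory.subr_ge0 lez_nat. Qed.

Lemma frugalE B n : frugal B n = (phi B n < delta B n).
Proof. by rewrite /frugal /h Num.Theory.subr_gt0 ltz_nat. Qed.

(** * Divergence of the product of [1 + 1/p] over the primes *)

Lemma count_multiples p N : 0 < p -> \sum_(i < N) (p %| i.+1 : nat) = N %/ p.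
Proof.
move=> p0; elim: N => [|N IHN]; first by rewrite big_ord0 div0n.
by rewrite big_ord_recr /= IHN divnS // addnC.
Qed.

Definition smooth (P n : nat) : bool := all (fun q => q <= P) (primes n).

Definition primes_between (P N : nat) : seq nat := [seq p <- iota P.+1 (N - P) | prime p].

Lemma mem_primes_between P N p :
  (p \in primes_between P N) = [&& prime p, P < p & p <= N].
Proof. by rewrite mem_filter mem_iota; case: prime => //=; apply/andP/andP => -[]; lia. Qed.

Lemma uniq_primes_between P N : uniq (primes_between P N).
Proof. by rewrite filter_uniq // iota_uniq. Qed.

Lemma leq_count_smooth_add_multiples P N :
  N <= \sum_(i < N) (smooth P i.+1 : nat) + \sum_(p <- primes_between P N) N %/ p.
Proof.
have -> : \sum_(p <- primes_between P N) N %/ p =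
          \sum_(p <- primes_between P N) \sum_(i < N) (p %| i.+1 : nat).
  apply: eq_big_seq => p; rewrite mem_primes_between => /andP[pp _].
  by rewrite count_multiples ?prime_gt0.
rewrite exchange_big -big_split /= -{1}(card_ord N) -sum1_card; apply: leq_sum => i _.
case: (boolP (smooth P i.+1)) => [_|/allPn[q qi qP]]; first by rewrite leq_addr.
move: qi; rewrite mem_primes => /and3P[qp _ qi].
have q_mem : q \in primes_between P N.
  by rewrite mem_primes_between qp ltnNge qP /= (leq_trans (dvdn_leq _ qi)).
by rewrite add0n (bigD1_seq q) ?uniq_primes_between //= qi.
Qed.

Lemma logn_leq_exp2 q n t : 0 < n -> n <= 2 ^ t -> logn q n <= t.
Proof.
move=> n0 nt; have [->|lg] := posnP (logn q n); first by [].
have qp : prime q by move: lg; rewrite logn_gt0 mem_primes => /andP[].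
rewrite -(@leq_exp2l 2) //; apply: leq_trans nt; apply: leq_trans (dvdn_leq n0 (pfactor_dvdnn q n)).
by rewrite leq_exp2r // prime_gt1.
Qed.

Lemma count_smooth P N t : N <= 2 ^ t ->
  \sum_(i < N) (smooth P i.+1 : nat) <= t.+1 ^ P.+1.
Proof.
(* A P-smooth number up to 2^t is determined by its exponents at 0, ..., P, each at most t. *)
move=> Nt; rewrite -big_mkcond /= sum1_card.
have -> : t.+1 ^ P.+1 = #|{ffun 'I_P.+1 -> 'I_t.+1}| by rewrite card_ffun !card_ord.
have logt (i : 'I_N) q : logn q i.+1 < t.+1 by rewrite ltnS logn_leq_exp2 // (leq_trans _ Nt).
pose f (i : 'I_N) := [ffun q : 'I_P.+1 => Ordinal (logt i q)].
apply: (@leq_card_in _ _ f) => i j si sj /ffunP fij; apply/val_inj/succn_inj.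
apply: eqn_from_log => // q; have [qP|Pq] := leqP q P.
  by have := congr1 val (fij (Ordinal (qP : q < P.+1))); rewrite !ffunE.
have smooth_logn k : smooth P k -> logn q k = 0.
  move=> sk; apply/eqP; rewrite eqn0Ngt logn_gt0; apply: contraTN sk => qk.
  by apply/allPn; exists q; rewrite // -ltnNge.
by rewrite !smooth_logn.
Qed.

Lemma prod_succ_geq_sum_div (s : seq nat) N : all (fun p => 0 < p) s ->
  \prod_(p <- s) p * (N + \sum_(p <- s) N %/ p) <= N * \prod_(p <- s) p.+1.
Proof.
elim: s => [|p s IHs] /=; first by rewrite !big_nil addn0 muln1 mul1n.
move=> /andP[p0 /IHs]; rewrite !big_cons.
set P1 := \prod_(q <- s) q; set Q1 := \prod_(q <- s) q.+1; set S1 := \sum_(q <- s) N %/ q.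
move=> IH; have pNp : p * (N %/ p) <= N by rewrite mulnC leq_trunc_div.
rewrite mulnCA; apply: leq_trans (leq_mul (leqnn p.+1) IH).
have : p * P1 * (N %/ p) <= N * P1 by rewrite mulnAC leq_mul2r pNp orbT.
nia.
Qed.

Lemma sq_leq_exp2 j : 4 <= j -> j * j <= 2 ^ j.
Proof.
elim: j => // j IHj; rewrite leq_eqVlt => /orP[/eqP <- //|j4].
by have := IHj j4; rewrite expnS; nia.
Qed.

Lemma primes_between_prod_succ P : exists2 N, P < N &
  3 * \prod_(p <- primes_between P N) p <= 2 * \prod_(p <- primes_between P N) p.+1.
Proof.
(* For N = 2^t, t = 2^(P+4) - 1, at most N/2 numbers up to N are P-smooth, so the multiples of
   the primes in (P, N] give sum (N / p) >= N / 2, hence prod (1 + 1/p) >= 3/2. *)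
pose j := P + 4; pose t := (2 ^ j).-1; pose N := 2 ^ t.
have j2 : 0 < 2 ^ j by rewrite expn_gt0.
have tj : j <= t by have := ltn_expl j (isT : 1 < 2); rewrite /t; lia.
have tN : t < N by apply: ltn_expl.
have few_smooth : 2 * t.+1 ^ P.+1 <= N.
  have -> : t.+1 = 2 ^ j by rewrite /t prednK.
  rewrite -expnM -expnS /N leq_exp2l //.
  by have := sq_leq_exp2 (isT : 4 <= 4 + P); rewrite addnC -/j /t; nia.
exists N; first by lia.
have cover := leq_count_smooth_add_multiples P N.
have smooth_le := count_smooth P (leqnn N).
have pos : all (fun p => 0 < p) (primes_between P N).
  by apply/allP => p; rewrite mem_primes_between => /andP[/prime_gt0].
have := prod_succ_geq_sum_div N pos.
set A := \prod_(p <- _) p; set C := \prod_(p <- _) p.+1; set S := \sum_(p <- _) _.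
move=> AC; have N0 : 0 < N by rewrite expn_gt0.
have NS : N <= 2 * S by lia.
rewrite -(leq_pmul2l N0).
have : A * (2 * N) + A * N <= A * (2 * (N + S)) by rewrite -mulnDr leq_mul2l; lia.
nia.
Qed.

Lemma exists_primes_prod_succ_geq_exp k P : exists s : seq nat,
  [/\ uniq s, all prime s, all (fun p => P < p) s &
      3 ^ k * \prod_(p <- s) p <= 2 ^ k * \prod_(p <- s) p.+1].
Proof.
elim: k P => [|k IHk] P; first by exists [::]; rewrite !big_nil.
have [N PN gainN] := primes_between_prod_succ P; have [s [us ps Ns gains]] := IHk N.
exists (primes_between P N ++ s); split.
- rewrite cat_uniq us uniq_primes_between andbT /=; apply/hasPn => p /(allP Ns) Np.
  by rewrite mem_primes_between; apply/negP => /and3P[_ _]; lia.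
- by rewrite all_cat ps andbT; apply/allP => p; rewrite mem_primes_between => /andP[].
- rewrite all_cat; apply/andP; split; last by apply/allP => p /(allP Ns); lia.
  by apply/allP => p; rewrite mem_primes_between => /and3P[].
rewrite !big_cat !expnS /=; have := leq_mul gainN gains; nia.
Qed.

Lemma exists_primes_prod_succ_geq T P : exists s : seq nat,
  [/\ uniq s, all prime s, all (fun p => P < p) s &
      T * \prod_(p <- s) p <= \prod_(p <- s) p.+1].
Proof.
have [s [us ps Ps gains]] := exists_primes_prod_succ_geq_exp (2 * T) P.
exists s; split => //; move: gains; rewrite !expnM.
have [-> ->] : 3 ^ 2 = 9 /\ 2 ^ 2 = 4 by [].
set A := \prod_(p <- s) p; set C := \prod_(p <- s) p.+1 => gains.
have T_lt : T < 2 ^ T by apply: ltn_expl.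
have exp94 : 2 ^ T * 4 ^ T <= 9 ^ T.
  by have [->|T0] := posnP T; last by rewrite -expnMn leq_exp2r.
have : T * 4 ^ T * A <= 9 ^ T * A.
  by rewrite leq_mul2r (leq_trans _ exp94) ?orbT // leq_mul2r ltnW ?orbT.
have : 0 < 4 ^ T by rewrite expn_gt0.
nia.
Qed.

(** * Powers of two primes with ratio close to one *)

Lemma bernoulli_nat m k : m ^ k * (m + k) <= m * (m + 1) ^ k.
Proof.
elim: k => [|k IHk]; first by rewrite !expn0 addn0 mul1n muln1.
rewrite !expnS; have := leq_mul (leqnn (m + 1)) IHk; nia.
Qed.

Definition close (m x y : nat) : bool := (x < y) && (m * y < (m + 1) * x).

Lemma expn_neq_prime u v d e : prime u -> prime v -> u != v -> 0 < d ->
  u ^ d != v ^ e.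
Proof.
move=> pu pv uv d0; apply/eqP => ude; have : u %| v ^ e by rewrite -ude dvdn_exp.
by rewrite Euclid_dvdX // dvdn_prime2 // (negbTE uv).
Qed.

Lemma close_powers_of_cross u v m d c c' : prime u -> prime v -> u != v ->
  0 < m -> 0 < d ->
  m * u ^ d * v ^ c < (m + 1) * v ^ c' -> m * v ^ c' < (m + 1) * (u ^ d * v ^ c) ->
  exists e, close m (v ^ e) (u ^ d) || close m (u ^ d) (v ^ e).
Proof.
move=> pu pv uv m0 d0 lt1 lt2.
have v0 : 0 < v ^ c by rewrite expn_gt0 prime_gt0.
have ud1 : 1 < u ^ d by rewrite -(exp1n d) ltn_exp2r // prime_gt1.
have [e ce] : exists e, c' = c + e.
  exists (c' - c); suff : c <= c' by lia.
  rewrite leqNgt; apply/negP => /ltnW/(leq_pexp2l (prime_gt0 pv)) vcc.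
  by have := leq_trans lt1 (leq_mul (leqnn _) vcc); nia.
move: lt1 lt2; rewrite ce expnD => lt1 lt2; exists e.
have {}lt1 : m * u ^ d < (m + 1) * v ^ e by rewrite -(ltn_pmul2r v0); nia.
have {}lt2 : m * v ^ e < (m + 1) * u ^ d by rewrite -(ltn_pmul2r v0); nia.
rewrite /close lt1 lt2 !andbT.
by have := expn_neq_prime e pu pv uv d0; case: ltngtP.
Qed.

(* [A / C] lies in [[rho ^ k.-1, rho ^ k)], where [rho = (m + 1) / m]. *)
Definition in_bucket (m k A C : nat) : bool :=
  ((m + 1) ^ k.-1 * C <= m ^ k.-1 * A) && (m ^ k * A < (m + 1) ^ k * C).

Lemma cross_of_same_bucket m k A C A' C' : 0 < m -> 0 < k -> 0 < A ->
  in_bucket m k A C -> in_bucket m k A' C' -> m * A' * C < (m + 1) * C' * A.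
Proof.
move=> m0 k0 A0 /andP[CA _] /andP[_]; rewrite -(prednK k0) !expnS.
set X := m ^ k.-1; set Y := (m + 1) ^ k.-1 in CA * => AC'.
have X0 : 0 < X by rewrite expn_gt0 m0.
have Y0 : 0 < Y by rewrite expn_gt0 addn1.
have XY0 : 0 < X * Y by rewrite muln_gt0 X0.
have XA0 : 0 < X * A by rewrite muln_gt0 X0.
rewrite -(ltn_pmul2l XY0).
apply: (@leq_ltn_trans (m * X * A' * (X * A))).
  by have := leq_mul (leqnn (m * X * A')) CA; lia.
by have := AC'; rewrite -(ltn_pmul2r XA0); lia.
Qed.

Lemma exists_same_bucket m v (A C : nat -> nat) : 0 < m ->
  (forall a, C a <= A a < v * C a) ->
  exists a a' k, [/\ a < a', 0 < k, in_bucket m k (A a) (C a) & in_bucket m k (A a') (C a')].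
Proof.
move=> m0 AC; pose J := m * v.
(* J buckets cover all ratios in [1, v) because rho^J > v; two of the J + 2 ratios share one. *)
have vJ : v * m ^ J < (m + 1) ^ J.
  rewrite -(ltn_pmul2l m0); apply: leq_trans (bernoulli_nat m J).
  have mJ0 : 0 < m ^ J by rewrite expn_gt0 m0.
  by rewrite {3}/J; nia.
pose Q a j := m ^ j * A a < (m + 1) ^ j * C a.
have notQ0 a : ~~ Q a 0 by rewrite /Q !expn0 !mul1n -leqNgt; case/andP: (AC a).
have QJ a : Q a J.
  case/andP: (AC a) => _ Av; apply: (@leq_trans (m ^ J * (v * C a))).
    by rewrite ltn_pmul2l ?expn_gt0 ?m0.
  by rewrite mulnA leq_mul2r mulnC ltnW ?orbT.
pose bucket a := ex_minn (ex_intro (Q a) J (QJ a)).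
have bucketP a : [/\ 0 < bucket a, bucket a <= J & in_bucket m (bucket a) (A a) (C a)].
  rewrite /bucket; case: ex_minnP => k Qk k_min.
  have k0 : 0 < k by case: k Qk {k_min} => // Q0; case/negP: (notQ0 a).
  split => //; first exact: k_min.
  by apply/andP; split; rewrite // leqNgt; apply/negP => /k_min; lia.
pose g (a : 'I_J.+2) : 'I_J.+1 := inord (bucket a).
have /injectivePn[a [a' neq_aa' eq_g]] : ~~ injectiveb g.
  by apply/negP => /injectiveP/leq_card; rewrite !card_ord ltnn.
wlog lt_aa' : a a' neq_aa' eq_g / a < a'.
  move=> IH; have [lt|gt|/val_inj eq] := ltngtP a a'; first exact: IH lt.
    by apply: (IH a' a) => //; rewrite eq_sym.
  by rewrite eq eqxx in neq_aa'.
have [k0 kJ bucket_a] := bucketP a; have [_ k'J bucket_a'] := bucketP a'.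
have eq_bucket : bucket a = bucket a' by move/(congr1 val): eq_g; rewrite /= !inordK.
by exists a, a', (bucket a); split; rewrite // eq_bucket.
Qed.

Lemma exists_close_powers u v m : prime u -> prime v -> u != v -> 0 < m ->
  exists d c, close m (v ^ c) (u ^ d) || close m (u ^ d) (v ^ c).
Proof.
move=> pu pv uv m0; pose c a := trunc_log v (u ^ a).
have uv_bounds a : v ^ c a <= u ^ a < v * v ^ c a.
  by rewrite trunc_logP ?prime_gt1 ?expn_gt0 ?prime_gt0 // -expnS trunc_log_ltn ?prime_gt1.
have [a [a' [k [lt_aa' k0 bucket_a bucket_a']]]] := exists_same_bucket m0 uv_bounds.
have ua0 : 0 < u ^ a by rewrite expn_gt0 prime_gt0.
have ua'0 : 0 < u ^ a' by rewrite expn_gt0 prime_gt0.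
have cross1 := cross_of_same_bucket m0 k0 ua0 bucket_a bucket_a'.
have cross2 := cross_of_same_bucket m0 k0 ua'0 bucket_a' bucket_a.
have [d d0 ea'] : exists2 d, 0 < d & a' = a + d by exists (a' - a); lia.
rewrite ea' expnD in cross1 cross2.
have [e close_de] : exists e, close m (v ^ e) (u ^ d) || close m (u ^ d) (v ^ e).
  apply: (close_powers_of_cross (c := c a) (c' := c (a + d))) => //.
    by rewrite -(ltn_pmul2r ua0); lia.
  by rewrite -(ltn_pmul2r ua0); lia.
by exists d, e.
Qed.

Lemma discrete_ivt (P : pred nat) lo hi : lo <= hi -> P lo -> ~~ P hi ->
  exists i, [/\ lo <= i, i < hi, P i & ~~ P i.+1].
Proof.
elim: hi => [|hi IHhi]; first by rewrite leqn0 => /eqP -> ->.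
rewrite leq_eqVlt => /orP[/eqP <- -> //|lt_lo_hi] Plo nPhi.
have [Phi|nPhi'] := boolP (P hi); first by exists hi; split => //; lia.
by have [i [? ? ? ?]] := IHhi lt_lo_hi Plo nPhi'; exists i; split => //; lia.
Qed.

Lemma approach_from_below m N (G : nat -> nat) S : 0 < N -> G 0 <= N < G S ->
  (forall k, k < S -> m * G k.+1 < (m + 1) * G k) ->
  exists2 k, k <= S & N <= G k /\ m * G k < (m + 1) * N.
Proof.
move=> N0 /andP[G0N NGS] step.
have [eqN|ltN] := eqVneq (G 0) N; first by exists 0 => //; rewrite eqN; split => //; lia.
have [k [_ kS GkN NGk]] : exists k, [/\ 0 <= k, k < S, G k < N & ~~ (G k.+1 < N)].
  apply: discrete_ivt => //; first by rewrite ltn_neqAle ltN.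
  by rewrite -leqNgt ltnW.
exists k.+1 => //; split; first by rewrite leqNgt.
by apply: leq_trans (step k kS) _; rewrite leq_mul2l ltnW ?orbT.
Qed.

Lemma walk_close u v m y c d a0 b0 N : 0 < m -> 0 < u -> 1 < v -> 0 < y ->
  close m (v ^ c) (u ^ d) -> v ^ c.+1 * c <= b0 ->
  y * u ^ a0 * v ^ b0 <= N < y * u ^ a0 * v ^ b0.+1 ->
  exists2 k, k <= v ^ c.+1 &
    let n := y * u ^ (a0 + k * d) * v ^ (b0 - k * c) in N <= n /\ m * n < (m + 1) * N.
Proof.
move=> m0 u0 v1 y0 /andP[vu close_vu] Sb0 /andP[G0N NGv].
(* A step multiplies by u^d / v^c < 1 + 1/m; S = v^(c+1) steps multiply by at least
   (1 + v^-c)^S >= 1 + v (Bernoulli), which overshoots N. *)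
set S := v ^ c.+1 in Sb0 *; set X := v ^ c in vu close_vu.
pose G k := y * u ^ (a0 + k * d) * v ^ (b0 - k * c).
have X0 : 0 < X by rewrite expn_gt0 ltnW.
have G_gt0 k : 0 < G k by rewrite /G !muln_gt0 y0 !expn_gt0 u0 ltnW.
have G_step k : k < S -> G k.+1 * X = G k * u ^ d.
  move=> kS; have kc : k.+1 * c <= b0 by apply: leq_trans Sb0; rewrite leq_mul2r kS orbT.
  have e1 : a0 + k.+1 * d = a0 + k * d + d by rewrite mulSn; lia.
  have e2 : b0 - k * c = b0 - k.+1 * c + c by rewrite mulSn in kc *; lia.
  by rewrite /G /X e1 e2 !expnD; lia.
have G0E : G 0 = y * u ^ a0 * v ^ b0 by rewrite /G !mul0n addn0 subn0.
have N_lt_GS : N < G S.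
  have XS0 : 0 < X ^ S by rewrite expn_gt0 X0.
  have GSX : G S * X ^ S = G 0 * (u ^ d) ^ S.
    have e : b0 = b0 - S * c + c * S by lia.
    by rewrite /G /X -!expnM !mul0n addn0 subn0 {2}e expnD addnC expnD [d * S]mulnC; lia.
  have bern : X ^ S * v.+1 <= (u ^ d) ^ S.
    have S0 : 0 < S by rewrite expn_gt0 ltnW.
    apply: (@leq_trans ((X + 1) ^ S)); last by rewrite leq_exp2r // addn1.
    have := bernoulli_nat X S; rewrite {2}/S expnS -/X.
    have -> : X ^ S * (X + v * X) = X * (X ^ S * v.+1) by lia.
    by rewrite leq_pmul2l.
  rewrite -(ltn_pmul2r XS0) GSX; apply: leq_trans (leq_mul (leqnn _) bern).
  by move: NGv; rewrite G0E expnSr; nia.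
have step k : k < S -> m * G k.+1 < (m + 1) * G k.
  move=> kS; rewrite -(ltn_pmul2r X0) -mulnA G_step //.
  by have := G_gt0 k; nia.
have N0 : 0 < N by rewrite (leq_trans _ G0N) // -G0E.
have [|k kS] := @approach_from_below m N G S N0 _ step; first by rewrite G0E G0N.
by exists k.
Qed.

(** * Construction of the test number *)

Lemma coprime_lt_prime d p : prime p -> 0 < d < p -> coprime d p.
Proof.
move=> pp /andP[d0 dp]; rewrite coprime_sym prime_coprime //.
by apply/negP => /(dvdn_leq d0); rewrite leqNgt dp.
Qed.

Lemma coprime_prod_large_primes d P (s : seq nat) : 0 < d <= P ->
  all prime s -> all (fun p => P < p) s -> coprime d (\prod_(p <- s) p).
Proof.
move=> /andP[d0 dP] ps Ps; rewrite big_seq; apply: coprime_big_prodr => p p_s.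
by apply: coprime_lt_prime; [exact: (allP ps) | rewrite d0 (leq_ltn_trans dP) ?(allP Ps)].
Qed.

Lemma exists_balanced_factor B P W Z : 1 < B -> 0 < W < Z ->
  exists y, [/\ 0 < y, forall d, 0 < d <= P -> coprime d y,
                Z * y <= W * B ^ phi B y & W * B ^ phi B y < B * (Z * y)].
Proof.
move=> B1 /andP[W0 WZ]; have [s [us ps Ps gain]] := exists_primes_prod_succ_geq Z P.
(* Along the prefixes y of s, W B^(phi y) overtakes Z y; a new prime p multiplies these by
   B^(delta p) <= B p and by p, so at the first overtaking W B^(phi y) < B Z y. *)
pose Phi j := \sum_(p <- take j s) delta B p.
pose Pr j := \prod_(p <- take j s) p.
have [j [_ js below nbelow]] : exists j, [/\ 0 <= j, j < size s,
    W * B ^ Phi j < Z * Pr j & ~~ (W * B ^ Phi j.+1 < Z * Pr j.+1)].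
  apply: discrete_ivt => //; first by rewrite /Phi /Pr take0 !big_nil !muln1.
  rewrite -leqNgt /Phi /Pr take_size; apply: leq_trans gain _.
  apply: leq_trans (leq_pmull _ W0); rewrite expn_sum big_seq [leqRHS]big_seq.
  by apply: leq_prod => p /(allP ps)/prime_gt0 p0; apply: ltn_exp_delta.
pose p := nth 0 s j; have pp : prime p by apply: (allP ps); rewrite mem_nth.
have take_rcons : take j.+1 s = rcons (take j s) p by rewrite (take_nth 0 js).
have PhiS : Phi j.+1 = Phi j + delta B p by rewrite /Phi take_rcons -cats1 big_cat big_seq1.
have PrS : Pr j.+1 = Pr j * p by rewrite /Pr take_rcons -cats1 big_cat big_seq1.
have phi_y : phi B (Pr j.+1) = Phi j.+1.
  apply: phi_prod_primes; first by rewrite take_uniq.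
  by apply/allP => q /mem_take/(allP ps).
exists (Pr j.+1); split.
- by rewrite /Pr big_seq prodn_cond_gt0 // => q /mem_take/(allP ps)/prime_gt0.
- move=> d dP; apply: coprime_prod_large_primes dP _ _.
    by apply/allP => q /mem_take/(allP ps).
  by apply/allP => q /mem_take/(allP Ps).
- by rewrite phi_y leqNgt.
rewrite phi_y PhiS PrS expnD mulnA; apply: (@leq_trans (Z * Pr j * B ^ delta B p)).
  by rewrite ltn_pmul2r ?expn_gt0 ?(ltnW B1).
have Bp := exp_delta_leqM B1 (prime_gt0 pp).
by apply: leq_trans (leq_mul (leqnn (Z * Pr j)) Bp) _; lia.
Qed.

Lemma phi_mul_prime_powers B y u v a b : 0 < y -> prime u -> prime v -> u != v ->
  0 < a -> 0 < b -> coprime u y -> coprime v y ->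
  phi B (y * u ^ a * v ^ b) = phi B y + (delta B u + delta' B a) + (delta B v + delta' B b).
Proof.
move=> y0 pu pv uv a0 b0 uy vy.
have ua0 : 0 < u ^ a by rewrite expn_gt0 prime_gt0.
have vb0 : 0 < v ^ b by rewrite expn_gt0 prime_gt0.
have uvX : coprime (u ^ a) (v ^ b).
  by rewrite coprimeXl // coprimeXr // prime_coprime // dvdn_prime2.
have yu0 : 0 < y * u ^ a by rewrite muln_gt0 y0.
have yu : coprime y (u ^ a) by rewrite coprime_sym coprimeXl.
have yuv : coprime (y * u ^ a) (v ^ b) by rewrite coprimeMl uvX andbT coprime_sym coprimeXl.
by rewrite (phiM B yu0 vb0 yuv) (phiM B y0 ua0 yu) !phi_primeX.
Qed.

Lemma cube_lt_exp2 n : 10 <= n -> n * n * n < 2 ^ n.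
Proof.
elim: n => // n IHn; rewrite leq_eqVlt => /orP[/eqP <- //|n10].
by have := IHn n10; rewrite expnS; nia.
Qed.

Lemma exists_balanced_start B P W u v a0 b : 1 < B -> 1 < v ->
  0 < W < u ^ a0 * v ^ b ->
  exists y b0, [/\ 0 < y, forall d, 0 < d <= P -> coprime d y, b <= b0 < b + B &
    y * u ^ a0 * v ^ b0 <= W * B ^ phi B y < y * u ^ a0 * v ^ b0.+1].
Proof.
move=> B1 v1 WZ; set Z := u ^ a0 * v ^ b in WZ.
have [y [y0 cop_y lo_y hi_y]] := exists_balanced_factor P B1 WZ.
have [b0 [lo_b0 hi_b0 below_b0 above_b0]] : exists b0, [/\ b <= b0, b0 < b + B,
    y * u ^ a0 * v ^ b0 <= W * B ^ phi B y & ~~ (y * u ^ a0 * v ^ b0.+1 <= W * B ^ phi B y)].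
  apply: discrete_ivt; first exact: leq_addr.
    by apply: leq_trans lo_y; rewrite /Z; lia.
  rewrite -ltnNge; apply: leq_trans hi_y _; rewrite expnD /Z.
  have Bv : B <= v ^ B.
    by apply/ltnW/(leq_trans (ltn_expl B (isT : 1 < 2))); rewrite leq_exp2r // ltnW.
  by have := leq_mul (leqnn (u ^ a0 * v ^ b * y)) Bv; lia.
exists y, b0; split => //; first by rewrite lo_b0.
by rewrite below_b0 ltnNge.
Qed.

Lemma window_of_close B m u v c d : 1 < B -> 0 < m -> prime u -> prime v -> u != v ->
  m < u -> m < v -> close m (v ^ c) (u ^ d) ->
  exists n K, [/\ coprime m n, phi B n = K.+1, B ^ K <= n & m * n < (m + 1) * B ^ K].
Proof.
move=> B1 m0 pu pv uv mu mv cl; have u0 := prime_gt0 pu; have v1 := prime_gt1 pv.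
(* a and b will both have X0 + 1 digits, so phi (y u^a v^b) = phi y + C + 2 X0 + 2 and the
   power of B to approximate is B^K = W B^(phi y). *)
pose S := v ^ c.+1; pose C := delta B u + delta B v.
pose X0 := 10 + S * (c + d) + B + B ^ C.+1; pose X := B ^ X0.
have X0X : X0 < X := ltn_expl X0 B1.
pose W := B ^ (C + (X0 + X0).+1).
have W_bounds : 0 < W < u ^ X * v ^ (X + S * c).
  rewrite expn_gt0 ltnW //=; have -> : W = B ^ C.+1 * (X * X).
    by rewrite /W /X -!expnD; congr (_ ^ _); lia.
  have cube : X * X * X < 2 ^ X by apply: cube_lt_exp2; lia.
  have exp2Z : 2 ^ X <= u ^ X * v ^ (X + S * c).
    apply: (@leq_trans (u ^ X)); last by rewrite leq_pmulr // expn_gt0 ltnW.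
    by rewrite leq_exp2r ?prime_gt1 // (leq_ltn_trans _ X0X).
  have BC : B ^ C.+1 < X by rewrite (leq_ltn_trans _ X0X) // /X0 leq_addl.
  by nia.
have [y [b0 [y0 cop_y /andP[lo_b0 hi_b0] b0_window]]] :=
  exists_balanced_start (u + v) B1 v1 W_bounds.
set K := C + (X0 + X0).+1 + phi B y; rewrite -expnD -/K in b0_window.
have Scb0 : S * c <= b0 by rewrite (leq_trans _ lo_b0) // leq_addl.
have [k kS [lo_n hi_n]] := walk_close m0 u0 v1 y0 cl Scb0 b0_window.
set a := X + k * d in lo_n hi_n; set b := b0 - k * c in lo_n hi_n.
have kSd : k * d <= S * d by rewrite leq_mul2r kS orbT.
have kSc : k * c <= S * c by rewrite leq_mul2r kS orbT.
have X2 : 2 * X <= B * X by rewrite leq_mul2r B1 orbT.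
have large : 10 + S * d + S * c + B < X by move: X0X; rewrite /X0; lia.
have da : delta B a = X0.+1 by apply: delta_eq; rewrite // expnS -/X /a; lia.
have db : delta B b = X0.+1 by apply: delta_eq; rewrite // expnS -/X /b; lia.
exists (y * u ^ a * v ^ b), K; split => //.
  rewrite !coprimeMr cop_y ?m0 /=; last by lia.
  by rewrite !coprimeXr // coprime_lt_prime ?m0.
have [uy vy] : coprime u y /\ coprime v y by split; apply: cop_y; lia.
have a1 : 1 < a by rewrite /a; lia.
have b1 : 1 < b by rewrite /b; lia.
rewrite phi_mul_prime_powers ?(ltnW a1) ?(ltnW b1) //.
by rewrite /delta' (gtn_eqF a1) (gtn_eqF b1) da db /C /K; lia.
Qed.

Lemma exists_window B m : 1 < B -> 0 < m ->
  exists n K, [/\ coprime m n, phi B n = K.+1, B ^ K <= n & m * n < (m + 1) * B ^ K].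
Proof.
move=> B1 m0; have [u mu pu] := prime_above m; have [v uv pv] := prime_above u.
have mv := ltn_trans mu uv; have neq_uv : u != v by rewrite neq_ltn uv.
have [d [c /orP[cl|cl]]] := exists_close_powers pu pv neq_uv m0.
  exact: window_of_close cl.
by apply: (window_of_close B1 m0 pv pu _ mv mu cl); rewrite eq_sym.
Qed.

Theorem proposition4 (B m : nat) :
  2 <= B -> 0 < m ->
  (forall n : nat, 0 < n -> economical B n -> economical B (m * n)) ->
  frugal B m.
Proof.
move=> B2 m0 mul_economical.
have [n [K [cop_mn phi_n Kn mn]]] := exists_window B2 m0.
have [delta_n delta_mn] := delta_window B2 m0 Kn mn.
have n0 : 0 < n by rewrite (leq_trans _ Kn) // expn_gt0 ltnW.
have := mul_economical n n0; rewrite !economicalE phi_n delta_n leqnn delta_mn phiM //.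
by rewrite frugalE => /(_ isT); lia.
Qed.
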